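(* Let $\mathrm{A}$ be admissible with parameter $\tau>0$ and let $s\geq0$. There exists $C>0$ (depending on $d$, $s$, $\mathrm{A}$) such that for all $\alpha\geq\alpha_{0}$, all $n\in\mathscr{C}_{\alpha}$ and all $(n_{1},n_{2},n_{3})\in(\mathbb{Z}^{d})^{3}\setminus(\Lambda^{(1)}(n)\cup\Lambda^{(3)}(n))$ with $n_{1}-n_{2}+n_{3}=n$ and $\Omega(\vec{n})\neq0$, \[ \frac{K_{\alpha}^{s}}{|\Omega(\vec{n})|}\leq C(n_{1}^{\ast})^{s}(n_{2}^{\ast})^{\frac{4\tau}{c(d)}} . \]
   Context: $\mathrm{A}$ is a real symmetric positive definite $d\times d$ matrix, $\lambda_{n}^{2}=n^{\intercal}\mathrm{A}n$, $|n|$ Euclidean norm. $\mathrm{A}$ is admissible with parameter $\tau$ if there is $c>0$ with $|a^{\intercal}\mathrm{A}b|\geq c|a|^{-\tau}|b|^{-\tau}$ for all nonzero $a,b\in\mathbb{Z}^{d}$. $\Omega(\vec{n})=\lambda_{n_{1}}^{2}-\lambda_{n_{2}}^{2}+\lambda_{n_{3}}^{2}-\lambda_{n}^{2}$; $n_{1}^{\ast}\geq n_{2}^{\ast}\geq n_{3}^{\ast}$ is the decreasing rearrangement of $|n_{1}|,|n_{2}|,|n_{3}|$. By a known result (Berti–Maspero), there exist $c(d)\in(0,2]$, $C(\mathrm{A},d)\geq2$ and a partition $(\mathscr{C}_{\alpha})_{\alpha\geq0}$ of $\mathbb{Z}^{d}$ with (i) $0\in\mathscr{C}_{0}$, $\max_{\mathscr{C}_{0}}|n|\leq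 C(\mathrm{A},d)$; (ii) $\max_{\mathscr{C}_{\alpha}}|n|\leq2\min_{\mathscr{C}_{\alpha}}|n|$ for $\alpha\geq1$; (iii) for $n_{1}\in\mathscr{C}_{\alpha_{1}},n_{2}\in\mathscr{C}_{\alpha_{2}}$, $\alpha_{1}\neq\alpha_{2}$: $|n_{1}-n_{2}|+|\lambda_{n_{1}}^{2}-\lambda_{n_{2}}^{2}|>(|n_{1}|+|n_{2}|)^{c(d)}$; such a partition and $c(d)$ are fixed. $K_{\alpha}=\min_{n\in\mathscr{C}_{\alpha}}|n|$ ($\alpha\geq1$), $\alpha_{0}=\min\{\alpha\geq1:K_{\alpha}\geq10^{10}C(\mathrm{A},d)\}$. For $n\in\mathscr{C}_{\alpha}$, $\alpha\geq\alpha_0$: $\Lambda^{(1)}(n)$ is the set of $(n_1,n_2,n_3)$ with $n_{1}-n_{2}+n_{3}=n$, $|\Omega(\vec n)|<1$, $n_{1}\in\mathscr{C}_{\alpha}$, $|n_{2}|,|n_{3}|<10^{-5}K_{\alpha}$; $\Lambda^{(3)}(n)$ is defined likewise with $n_{3}\in\mathscr{C}_{\alpha}$ and $|n_{1}|,|n_{2}|<10^{-5}K_{\alpha}$. *)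

From HB Require Import structures.
From mathcomp Require Import all_boot all_order all_algebra.
From mathcomp Require Import classical_sets reals exp.
Set Implicit Arguments. Unset Strict Implicit. Unset Printing Implicit Defensive.
Import Order.TTheory GRing.Theory Num.Theory.
Local Open Scope ring_scope.
Local Open Scope classical_set_scope.

Section Defs.
Variables (R : realType) (d : nat).
Implicit Types (A : 'M[R]_d) (n m : 'rV[int]_d).

Definition vR n : 'rV[R]_d := map_mx (fun z : int => z%:~R) n.

Definition nrm n : R := Num.sqrt (\sum_(i < d) ((n ord0 i)%:~R : R) ^+ 2).

Definition bform A n m : R := (vR n *m A *m (vR m)^T) ord0 ord0.

Definition lam2 A n : R := bform A n n.

Definition spd A : Prop :=
  A^T = A /\ forall x : 'rV[R]_d, x != 0 -> 0 < (x *m A *m x^T) ord0 ord0.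

Definition admissible A (tau : R) : Prop :=
  exists c : R, 0 < c /\ forall a b : 'rV[int]_d, a != 0 -> b != 0 ->
    c * (nrm a `^ (- tau)) * (nrm b `^ (- tau)) <= `|bform A a b|.

Definition Omega A n1 n2 n3 n : R := lam2 A n1 - lam2 A n2 + lam2 A n3 - lam2 A n.

(* the partition (C_alpha)_{alpha>=0} is encoded by the class-index map
   cls : Z^d -> nat, C_alpha = cls^{-1}(alpha); blocks nonempty (surjectivity). *)
Definition BM_partition A (c CA : R) (cls : 'rV[int]_d -> nat) : Prop :=
  [/\ (forall alpha : nat, exists n, cls n = alpha),
      cls 0 = 0%N,
      (forall n, cls n = 0%N -> nrm n <= CA),
      (forall (alpha : nat) n m, (1 <= alpha)%N -> cls n = alpha -> cls m = alpha ->
          nrm n <= 2 * nrm m) &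
      (forall n1 n2, cls n1 <> cls n2 ->
          (nrm n1 + nrm n2) `^ c < nrm (n1 - n2) + `|lam2 A n1 - lam2 A n2|)].

Definition Kal (cls : 'rV[int]_d -> nat) (alpha : nat) : R :=
  inf [set nrm n | n in [set m | cls m = alpha]].

Definition is_alpha0 (CA : R) (cls : 'rV[int]_d -> nat) (alpha0 : nat) : Prop :=
  [/\ (1 <= alpha0)%N, 10 ^+ 10 * CA <= Kal cls alpha0 &
      forall beta : nat, (1 <= beta)%N -> 10 ^+ 10 * CA <= Kal cls beta ->
        (alpha0 <= beta)%N].

Definition Lambda1 A cls (alpha : nat) n n1 n2 n3 : Prop :=
  [/\ n1 - n2 + n3 = n, `|Omega A n1 n2 n3 n| < 1, cls n1 = alpha,
      nrm n2 < 10 ^- 5 * Kal cls alpha & nrm n3 < 10 ^- 5 * Kal cls alpha].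

Definition Lambda3 A cls (alpha : nat) n n1 n2 n3 : Prop :=
  [/\ n1 - n2 + n3 = n, `|Omega A n1 n2 n3 n| < 1, cls n3 = alpha,
      nrm n1 < 10 ^- 5 * Kal cls alpha & nrm n2 < 10 ^- 5 * Kal cls alpha].

End Defs.
Arguments Kal {R d}.
Arguments nrm {R d}.
Arguments vR {R d}.
Arguments is_alpha0 {R d}.

Definition star1 {R : realType} (a b c : R) : R := Num.max a (Num.max b c).
Definition star3 {R : realType} (a b c : R) : R := Num.min a (Num.min b c).
Definition star2 {R : realType} (a b c : R) : R := a + b + c - star1 a b c - star3 a b c.

Definition brk {R : realType} (x : R) : R := Num.max 1 x.

(* Write t and T for the middle and the largest of the brackets <|n1|>, <|n2|>, <|n3|>,
   and n = n1 - n2 + n3.  Since Omega = 2 (n1 - n2)^T A (n2 - n3) with both factors of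
   length O(T), admissibility gives 1/|Omega| = O(T^(2 tau)) = O(t^(4 tau/c)) as long as
   T = O(t^(2/c)), while K_alpha <= |n| = O(T) bounds the numerator.  It remains to see
   that |Omega| < 1 and T >> t^(2/c) force the triple into Lambda^(1) or Lambda^(3).
   If n2 were the longest vector, lambda_{n2}^2 + lambda_n^2 < lambda_{n1}^2 + lambda_{n3}^2
   + 1 = O(t^2) would contradict lambda_{n2}^2 ~ |n2|^2.  If n1 is the longest (n3 is
   symmetric), then |n1 - n| + |lambda_{n1}^2 - lambda_n^2| = O(t^2) < |n1|^c, so the
   separation property of the partition puts n1 in the class of n; hence
   K_alpha >= |n1|/2 >> t >= |n2|, |n3|, i.e. the triple lies in Lambda^(1). *)

From HB Require Import structures.
From mathcomp Require Import all_boot all_order all_algebra.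
From mathcomp Require Import classical_sets reals exp.
From mathcomp Require Import all_classical all_reals all_analysis.
From mathcomp Require Import ring lra.
Import Order.TTheory GRing.Theory Num.Theory.
Import numFieldNormedType.Exports.
Local Open Scope ring_scope.
Local Open Scope classical_set_scope.
Set Implicit Arguments.
Unset Strict Implicit.

Section Rearrangement.
Variable R : realType.
Implicit Types a b c x y : R.

Ltac star_cases a b c :=
  rewrite /star2 /star1 /star3;
  case: (leP b c) => ?; case: (leP a b) => ?; case: (leP a c) => ?;
  rewrite ?maxEle ?minEle; repeat (case: ifPn => /=; rewrite -?ltNge => ?).

Lemma le_star1 a b c : [/\ a <= star1 a b c, b <= star1 a b c & c <= star1 a b c].
Proof. by split; star_cases a b c; lra. Qed.

Lemma star2_ge1 a b c : 1 <= a -> 1 <= b -> 1 <= c -> 1 <= star2 a b c.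
Proof. by move=> *; star_cases a b c; lra. Qed.

Lemma star2_lt_star1P a b c : star2 a b c < star1 a b c ->
  [\/ [/\ a = star1 a b c, b <= star2 a b c & c <= star2 a b c],
      [/\ b = star1 a b c, a <= star2 a b c & c <= star2 a b c] |
      [/\ c = star1 a b c, a <= star2 a b c & b <= star2 a b c]].
Proof.
star_cases a b c => ?.
all: first [by constructor 1; split; lra | by constructor 2; split; lra
           | by constructor 3; split; lra | lra].
Qed.

Lemma brk_ge1 x : 1 <= brk x.
Proof. by rewrite /brk le_max lexx. Qed.

Lemma le_brk x : x <= brk x.
Proof. by rewrite /brk le_max lexx orbT. Qed.

Lemma lt_brk x y : 1 <= y -> y < brk x -> y < x.
Proof. by rewrite /brk lt_max => y_ge1 /orP[/(le_lt_trans y_ge1)|]; rewrite ?ltxx. Qed.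

End Rearrangement.

Section MatrixForm.
Variables (R : realType) (d : nat) (A : 'M[R]_d).
Implicit Types x y z : 'rV[R]_d.

Definition mxform x y : R := (x *m A *m y^T) ord0 ord0.

Lemma mxformDl x y z : mxform (x + y) z = mxform x z + mxform y z.
Proof. by rewrite /mxform !mulmxDl mxE. Qed.

Lemma mxformDr x y z : mxform z (x + y) = mxform z x + mxform z y.
Proof. by rewrite /mxform linearD /= mulmxDr mxE. Qed.

Lemma mxformNl x z : mxform (- x) z = - mxform x z.
Proof. by rewrite /mxform !mulNmx mxE. Qed.

Lemma mxformNr x z : mxform z (- x) = - mxform z x.
Proof. by rewrite /mxform linearN /= mulmxN mxE. Qed.

Lemma mxformC x y : A^T = A -> mxform x y = mxform y x.
Proof.
move=> sA; rewrite /mxform.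
have -> : (x *m A *m y^T) ord0 ord0 = ((x *m A *m y^T)^T) ord0 ord0 by rewrite [RHS]mxE.
by rewrite 2!trmx_mul trmxK sA mulmxA.
Qed.

Lemma mxformZ (a : R) x : mxform (a *: x) (a *: x) = a ^+ 2 * mxform x x.
Proof.
by rewrite /mxform linearZ /= -!scalemxAl -scalemxAr !mxE mulrA expr2.
Qed.

Lemma mxform_continuous : continuous (fun x => mxform x x).
Proof.
have -> : (fun x => mxform x x) =
    (fun x => \sum_j (\sum_i x ord0 i * A i j) * x ord0 j).
  by apply: funext => x; rewrite /mxform !mxE; apply: eq_bigr => j _; rewrite !mxE.
apply: (continuous_big (@add_continuous R)) => j _ x.
apply: continuousM; last exact: coord_continuous.
move: x; apply: (continuous_big (@add_continuous R)) => i _ x.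
by apply: continuousM; [exact: coord_continuous | exact: cst_continuous].
Qed.

Lemma mx_norm_coord_le x i : `|x ord0 i| <= `|x|.
Proof.
rewrite [X in _ <= X]/Num.norm /= mx_normrE.
exact: (le_bigmax _ (fun ij : 'I_1 * 'I_d => `|x ij.1 ij.2|) (ord0, i)).
Qed.

Lemma mxform_diag_le x : `|mxform x x| <= (\sum_j \sum_i `|A i j|) * `|x| ^+ 2.
Proof.
rewrite /mxform !mxE mulr_suml.
apply: le_trans (ler_norm_sum _ _ _) _; apply: ler_sum => j _.
rewrite !mxE normrM mulr_suml.
apply: le_trans (ler_pM _ _ (ler_norm_sum _ _ _) (mx_norm_coord_le x j)) _ => //.
rewrite mulr_suml; apply: ler_sum => i _.
rewrite normrM [`|x _ _| * _]mulrC -mulrA expr2 ler_wpM2l //.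
by rewrite ler_wpM2r // mx_norm_coord_le.
Qed.

(* The minimum of the form on the (compact) unit sphere of the max-norm. *)
Lemma mxform_coercive : (forall x, x != 0 -> 0 < mxform x x) ->
  exists2 mu : R, 0 < mu & forall x, mu * `|x| ^+ 2 <= mxform x x.
Proof.
move=> A_pos.
have unit_norm x : x != 0 -> `|(`|x|^-1 *: x)| = 1.
  by move=> x0; rewrite normrZ normfV normr_id mulVf // normr_eq0.
have [[x0 x0_neq0]|all0] := pselect (exists x : 'rV[R]_d, x != 0); last first.
  exists 1 => // x; have -> : x = 0 by apply/eqP/negPn/negP => x0; apply: all0; exists x.
  by rewrite normr0 expr0n /= mulr0 /mxform !mul0mx mxE.
pose S := [set x : 'rV[R]_d | `|x| = 1].
have S_compact : compact S.
  apply: bounded_closed_compact.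
    by exists 1; split => // M M1 t /= ->; rewrite ltW.
  have -> : S = (fun x : 'rV[R]_d => `|x|) @^-1` [set 1] by [].
  apply: preimage_closed; last exact: closed_eq.
  by move=> y _; exact: norm_continuous.
have [m Sm m_min] := compact_EVT_min (ex_intro _ _ (unit_norm _ x0_neq0)) S_compact
  (continuous_subspaceT mxform_continuous).
have m_neq0 : m != 0.
  apply: contraTneq Sm => ->; rewrite notin_setE /S /= normr0 => /eqP.
  by rewrite eq_sym oner_eq0.
exists (mxform m m); first exact: A_pos.
move=> x; have [->|x_neq0] := eqVneq x 0.
  by rewrite normr0 expr0n /= mulr0 /mxform !mul0mx mxE.
have := m_min _ (mem_set (unit_norm _ x_neq0)); rewrite mxformZ => h.
have x2_gt0 : 0 < `|x| ^+ 2 by rewrite exprn_gt0 // normr_gt0.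
by rewrite -ler_pdivlMr // mulrC -exprVn.
Qed.

End MatrixForm.

Section IntegerVectors.
Variables (R : realType) (d : nat).
Implicit Types (A : 'M[R]_d) (a b n : 'rV[int]_d).

Lemma vRD a b : vR (a + b) = vR a + vR b :> 'rV[R]_d.
Proof. by apply/matrixP => i j; rewrite !mxE intrD. Qed.

Lemma vRN a : vR (- a) = - vR a :> 'rV[R]_d.
Proof. by apply/matrixP => i j; rewrite !mxE intrN. Qed.

Lemma vR0 : vR 0 = 0 :> 'rV[R]_d.
Proof. by apply/matrixP => i j; rewrite !mxE. Qed.

Lemma bformE A a b : bform A a b = mxform A (vR a) (vR b).
Proof. by []. Qed.

Lemma Omega_bform A n1 n2 n3 : A^T = A ->
  Omega A n1 n2 n3 (n1 - n2 + n3) = 2 * bform A (n1 - n2) (n2 - n3).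
Proof.
move=> sA; rewrite /Omega /lam2 !bformE !vRD !vRN.
rewrite !(mxformDl, mxformDr, mxformNl, mxformNr).
rewrite [mxform A (vR n2) (vR n1)]mxformC // [mxform A (vR n3) (vR n1)]mxformC //.
by rewrite [mxform A (vR n3) (vR n2)]mxformC //; ring.
Qed.

Lemma Omega_swap13 A n1 n2 n3 n : Omega A n3 n2 n1 n = Omega A n1 n2 n3 n.
Proof. by rewrite /Omega; ring. Qed.

Lemma nrm_ge0 n : 0 <= nrm (R:=R) n.
Proof. exact: sqrtr_ge0. Qed.

Lemma nrm0 : nrm (R:=R) (0 : 'rV[int]_d) = 0.
Proof. by rewrite /nrm big1 ?sqrtr0 // => i _; rewrite mxE expr0n. Qed.

Lemma nrm_sqr n : nrm (R:=R) n ^+ 2 = \sum_(i < d) ((n ord0 i)%:~R : R) ^+ 2.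
Proof. by rewrite /nrm sqr_sqrtr // sumr_ge0 // => i _; rewrite sqr_ge0. Qed.

Lemma coord_le_nrm n i : `|((n ord0 i)%:~R : R)| <= nrm n.
Proof.
rewrite -sqrtr_sqr /nrm ler_sqrt; last by rewrite sumr_ge0 // => j _; rewrite sqr_ge0.
by rewrite (bigD1 i) //= lerDl sumr_ge0 // => j _; rewrite sqr_ge0.
Qed.

Lemma nrm_gt0 n : n != 0 -> 0 < nrm (R:=R) n.
Proof.
move=> n_neq0; have [i ni] : exists i, n ord0 i != 0.
  apply/existsP; apply: contraNT n_neq0; rewrite negb_exists => /forallP n0.
  by apply/eqP/matrixP => i j; rewrite (ord1 i) mxE; exact/eqP/negPn/n0.
by apply: lt_le_trans (coord_le_nrm n i); rewrite normr_gt0 intr_eq0.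
Qed.

Lemma mx_norm_vR_le_nrm n : `|vR n : 'rV[R]_d| <= nrm n.
Proof.
rewrite [X in X <= _]/Num.norm /= mx_normrE.
apply: bigmax_le => [|[i j] _]; first exact: nrm_ge0.
by rewrite /vR mxE (ord1 i) coord_le_nrm.
Qed.

(* The crude constant [d.+1] (instead of [sqrt d]) stays positive when [d = 0]. *)
Lemma nrm_le_mx_norm n : nrm n <= d.+1%:R * `|vR n : 'rV[R]_d|.
Proof.
rewrite -ler_sqr ?nnegrE ?nrm_ge0 ?mulr_ge0 // nrm_sqr exprMn.
apply: (@le_trans _ _ (\sum_(i < d) `|vR n : 'rV[R]_d| ^+ 2)).
  apply: ler_sum => i _; rewrite -real_normK ?num_real // ler_sqr ?nnegrE //.
  by have := mx_norm_coord_le (vR n : 'rV[R]_d) i; rewrite /vR mxE.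
rewrite sumr_const card_ord -[_ *+ d]mulr_natl ler_wpM2r ?sqr_ge0 // -natrX ler_nat.
by rewrite (leq_trans (leqnSn d)) // expnS expn1 leq_pmulr.
Qed.

Lemma nrm_addB_le a b n : nrm (R:=R) (a - b + n) <= d.+1%:R * (nrm a + nrm b + nrm n).
Proof.
apply: le_trans (nrm_le_mx_norm _) _; rewrite ler_wpM2l // !vRD vRN.
apply: le_trans (ler_normD _ _) _; rewrite lerD ?mx_norm_vR_le_nrm //.
by apply: le_trans (ler_normB _ _) _; rewrite lerD ?mx_norm_vR_le_nrm.
Qed.

Lemma nrmB_le a b : nrm (R:=R) (a - b) <= d.+1%:R * (nrm a + nrm b).
Proof. by have := nrm_addB_le a b 0; rewrite !addr0 nrm0 addr0. Qed.

Lemma lam2_coercive A : (forall x, x != 0 -> 0 < mxform A x x) ->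
  exists2 mu : R, 0 < mu & forall n, mu * nrm n ^+ 2 <= lam2 A n.
Proof.
move=> /mxform_coercive[mu mu_gt0 A_ge]; exists (mu / d.+1%:R ^+ 2).
  by rewrite divr_gt0 // exprn_gt0.
move=> n; apply: le_trans (A_ge (vR n)); rewrite mulrAC ler_pdivrMr ?exprn_gt0 //.
rewrite -mulrA -exprMn [_ * d.+1%:R]mulrC ler_wpM2l ?(ltW mu_gt0) //.
by rewrite ler_sqr ?nnegrE ?nrm_ge0 ?mulr_ge0 // nrm_le_mx_norm.
Qed.

Lemma lam2_bounded A : exists2 M : R, 0 <= M & forall n, `|lam2 A n| <= M * nrm n ^+ 2.
Proof.
have A_ge0 : 0 <= \sum_j \sum_i `|A i j| by do 2!apply: sumr_ge0 => ? _.
exists (\sum_j \sum_i `|A i j|) => // n.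
apply: le_trans (mxform_diag_le A (vR n)) _.
by rewrite ler_wpM2l ?ler_sqr ?nnegrE ?nrm_ge0 ?mx_norm_vR_le_nrm.
Qed.

Lemma bform0l A (b : 'rV[int]_d) : bform A 0 b = 0.
Proof. by rewrite bformE vR0 /mxform !mul0mx mxE. Qed.

Lemma bform0r A (a : 'rV[int]_d) : bform A a 0 = 0.
Proof. by rewrite bformE vR0 /mxform trmx0 mulmx0 mxE. Qed.

End IntegerVectors.

Section ClassRadius.
Variables (R : realType) (d : nat) (cls : 'rV[int]_d -> nat).

Lemma Kal_le alpha n : cls n = alpha -> Kal (R:=R) cls alpha <= nrm n.
Proof.
move=> cls_n; apply: ge_inf; last by exists n.
by exists 0 => _ [m _ <-]; exact: nrm_ge0.
Qed.

Lemma Kal_ge0 alpha n : cls n = alpha -> 0 <= Kal (R:=R) cls alpha.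
Proof.
move=> cls_n; apply: lb_le_inf; first by exists (nrm n); exists n.
by move=> _ [m _ <-]; exact: nrm_ge0.
Qed.

Lemma Kal_ge_half (A : 'M[R]_d) (c CA : R) alpha n :
  BM_partition A c CA cls -> (1 <= alpha)%N -> cls n = alpha ->
  nrm n / 2 <= Kal (R:=R) cls alpha.
Proof.
case=> _ _ _ dyadic _ a_ge1 cls_n; apply: lb_le_inf; first by exists (nrm n); exists n.
by move=> _ [m cls_m <-]; rewrite ler_pdivrMr // mulrC (dyadic alpha).
Qed.

Lemma Kal_le_star1 alpha n1 n2 n3 :
  cls (n1 - n2 + n3) = alpha ->
  Kal (R:=R) cls alpha <= 3 * d.+1%:R * star1 (brk (nrm n1)) (brk (nrm n2)) (brk (nrm n3)).
Proof.
move=> cls_n; apply: le_trans (Kal_le cls_n) _; apply: le_trans (nrm_addB_le R _ _ _) _.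
have [b1T b2T b3T] := le_star1 (brk (nrm (R:=R) n1)) (brk (nrm n2)) (brk (nrm n3)).
have := le_brk (nrm (R:=R) n1); have := le_brk (nrm (R:=R) n2).
have := le_brk (nrm (R:=R) n3).
rewrite [3 * _]mulrC -mulrA => *; apply: ler_wpM2l => //; lra.
Qed.

Lemma Kal_powR_le_star1 (s : R) alpha n1 n2 n3 : 0 <= s ->
  cls (n1 - n2 + n3) = alpha ->
  Kal (R:=R) cls alpha `^ s
    <= (3 * d.+1%:R) `^ s * star1 (brk (nrm n1)) (brk (nrm n2)) (brk (nrm n3)) `^ s.
Proof.
move=> s_ge0 cls_n.
have [b1_le _ _] := le_star1 (brk (nrm (R:=R) n1)) (brk (nrm n2)) (brk (nrm n3)).
have T_ge0 := le_trans (le_trans ler01 (brk_ge1 _)) b1_le.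
rewrite -powRM ?mulr_ge0 //; apply: (ge0_ler_powR s_ge0); rewrite ?nnegrE ?mulr_ge0 //.
  exact: Kal_ge0 cls_n.
exact: Kal_le_star1.
Qed.

End ClassRadius.

Lemma Omega_inv_le_admissible (R : realType) d (A : 'M[R]_d) (c0 tau X : R) n1 n2 n3 :
  A^T = A -> 0 < c0 -> 0 <= tau ->
  (forall a b : 'rV[int]_d, a != 0 -> b != 0 ->
     c0 * nrm a `^ (- tau) * nrm b `^ (- tau) <= `|bform A a b|) ->
  nrm n1 <= X -> nrm n2 <= X -> nrm n3 <= X ->
  Omega A n1 n2 n3 (n1 - n2 + n3) != 0 ->
  `|Omega A n1 n2 n3 (n1 - n2 + n3)|^-1 <= (2 * d.+1%:R * X) `^ (2 * tau) / (2 * c0).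
Proof.
move=> sA c0_gt0 tau_ge0 adm n1X n2X n3X; rewrite Omega_bform // => Om_neq0.
have u_neq0 : n1 - n2 != 0 by apply: contraNneq Om_neq0 => ->; rewrite bform0l mulr0.
have v_neq0 : n2 - n3 != 0 by apply: contraNneq Om_neq0 => ->; rewrite bform0r mulr0.
set Y := (2 * d.+1%:R * X) `^ tau.
have pow_le (a b : 'rV[int]_d) : nrm a <= X -> nrm b <= X -> nrm (a - b) `^ tau <= Y.
  move=> aX bX; apply: ge0_ler_powR; rewrite ?nnegrE ?nrm_ge0 //.
    by rewrite !mulr_ge0 // (le_trans (nrm_ge0 R a)).
  apply: le_trans (nrmB_le R _ _) _; rewrite -mulrA mulrCA.
  by apply: ler_wpM2l => //; lra.
have Nu_gt0 := powR_gt0 tau (nrm_gt0 R u_neq0).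
have Nv_gt0 := powR_gt0 tau (nrm_gt0 R v_neq0).
have := adm _ _ u_neq0 v_neq0; rewrite !powRN -mulrA -invfM ler_pdivrMr ?mulr_gt0 //.
move=> c0_le; have {}c0_le : 2 * c0 <= `|2 * bform A (n1 - n2) (n2 - n3)| * Y ^+ 2.
  rewrite normrM gtr0_norm // -mulrA; apply: ler_wpM2l => //.
  apply: le_trans c0_le _; apply: ler_wpM2l => //; rewrite expr2.
  exact: ler_pM (ltW Nu_gt0) (ltW Nv_gt0) (pow_le _ _ n1X n2X) (pow_le _ _ n2X n3X).
rewrite [2 * tau]mulrC powRrM powR_mulrn ?powR_ge0 // -/Y.
by rewrite ler_pdivlMr ?mulr_gt0 // ler_pdivrMl // normr_gt0.
Qed.

Lemma lt_powR_of_lt_mul_powR (R : realType) (c L t x : R) : 0 < c -> 0 <= L -> 0 <= t ->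
  L * t `^ (2 / c) < x -> L `^ c * t ^+ 2 < x `^ c.
Proof.
move=> c_gt0 L_ge0 t_ge0 lt_x.
have -> : L `^ c * t ^+ 2 = (L * t `^ (2 / c)) `^ c.
  by rewrite powRM ?powR_ge0 // -powRrM divfK ?gt_eqF // powR_mulrn.
have lhs_ge0 : 0 <= L * t `^ (2 / c) by rewrite mulr_ge0 ?powR_ge0.
by apply: gt0_ltr_powR; rewrite // nnegrE // (le_trans lhs_ge0) ?ltW.
Qed.

Section NonResonance.
Variables (R : realType) (d : nat) (A : 'M[R]_d) (cls : 'rV[int]_d -> nat).
Variables (c CA mu M L : R).
Hypotheses (c_gt0 : 0 < c) (c_le2 : c <= 2) (BM : BM_partition A c CA cls).
Hypotheses (mu_gt0 : 0 < mu) (M_ge0 : 0 <= M).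
Hypothesis lam2_ge : forall n, mu * nrm n ^+ 2 <= lam2 A n.
Hypothesis lam2_le : forall n, `|lam2 A n| <= M * nrm n ^+ 2.
Local Notation D := (d.+1%:R : R).
Hypotheses (L_ge : 2 * 10 ^+ 5 <= L) (L_geB : 2 * D + 2 * M + 1 <= L `^ c).
Hypothesis L_gemu : 2 * M + 1 <= mu * L.

Lemma L_ge1 : 1 <= L.
Proof. by apply: le_trans L_ge; rewrite -natrX -natrM ler1n. Qed.

Lemma lam2_le_sqr n t : nrm n <= t -> `|lam2 A n| <= M * t ^+ 2.
Proof.
move=> n_le; apply: le_trans (lam2_le n) _; rewrite ler_wpM2l //.
by rewrite ler_sqr ?nnegrE ?nrm_ge0 // (le_trans (nrm_ge0 R n)).
Qed.

Lemma nrm_middle_le n1 n2 n3 n t : 1 <= t -> nrm n1 <= t -> nrm n3 <= t ->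
  `|Omega A n1 n2 n3 n| < 1 -> nrm n2 <= L * t.
Proof.
move=> t_ge1 n1_le n3_le Om_lt1; rewrite leNgt; apply/negP => n2_gt.
have L_ge1 := L_ge1.
have lam_n : 0 <= lam2 A n by apply: le_trans (lam2_ge n); rewrite mulr_ge0 ?sqr_ge0 ?ltW.
have lam_n2 : lam2 A n2 = lam2 A n1 + lam2 A n3 - lam2 A n - Omega A n1 n2 n3 n.
  by rewrite /Omega; ring.
have : (2 * M + 1) * t ^+ 2 < lam2 A n2.
  apply: lt_le_trans (lam2_ge n2); apply: (@le_lt_trans _ _ (mu * (L * t) ^+ 2)).
    rewrite [(L * t) ^+ 2]exprMn [mu * _]mulrA; apply: ler_wpM2r; first exact: sqr_ge0.
    apply: le_trans L_gemu _; rewrite expr2 mulrA.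
    by rewrite ler_peMr ?L_ge1 // mulr_ge0 ?(ltW mu_gt0) ?(le_trans ler01 L_ge1).
  by rewrite ltr_pM2l // ltr_sqr ?nnegrE ?nrm_ge0 ?mulr_ge0 //; lra.
have := lam2_le_sqr n1_le; have := lam2_le_sqr n3_le.
have := ler_norm (lam2 A n1); have := ler_norm (lam2 A n3).
have := ler_norm (- Omega A n1 n2 n3 n); rewrite normrN.
have : 1 <= t ^+ 2 by rewrite expr_ge1 // (le_trans ler01).
by lra.
Qed.

Lemma first_same_class n1 n2 n3 t : 1 <= t -> nrm n2 <= t -> nrm n3 <= t ->
  `|Omega A n1 n2 n3 (n1 - n2 + n3)| < 1 ->
  (2 * D + 2 * M + 1) * t ^+ 2 < nrm n1 `^ c -> cls n1 = cls (n1 - n2 + n3).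
Proof.
move=> t_ge1 n2_le n3_le Om_lt1 n1_long.
have [//|/eqP neq] := eqVneq (cls n1) (cls (n1 - n2 + n3)); exfalso.
case: BM => _ _ _ _ /(_ _ _ neq); apply/negP; rewrite -leNgt.
have -> : n1 - (n1 - n2 + n3) = n2 - n3 by rewrite opprD opprB addrA addrCA subrr addr0.
have t_le_sqr : t <= t ^+ 2 by rewrite expr2 ler_peMl //; lra.
have diff_le : nrm (n2 - n3) <= 2 * D * t ^+ 2.
  apply: le_trans (nrmB_le R _ _) _; rewrite -mulrA mulrCA.
  by apply: ler_wpM2l => //; lra.
have lam_diff : lam2 A n1 - lam2 A (n1 - n2 + n3)
    = Omega A n1 n2 n3 (n1 - n2 + n3) + lam2 A n2 - lam2 A n3 by rewrite /Omega; ring.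
have lam_le : `|lam2 A n1 - lam2 A (n1 - n2 + n3)| <= 1 + 2 * M * t ^+ 2.
  rewrite lam_diff; apply: le_trans (ler_normB _ _) _.
  apply: le_trans (lerD (ler_normD _ _) (lexx _)) _.
  by have := lam2_le_sqr n2_le; have := lam2_le_sqr n3_le; lra.
have : nrm n1 `^ c <= (nrm n1 + nrm (n1 - n2 + n3)) `^ c.
  by apply: (ge0_ler_powR (ltW c_gt0)); rewrite ?nnegrE ?addr_ge0 ?lerDl ?nrm_ge0.
by lra.
Qed.

Lemma Lambda1_of_first_long alpha n1 n2 n3 t :
  (1 <= alpha)%N -> cls (n1 - n2 + n3) = alpha -> 1 <= t ->
  nrm n2 <= t -> nrm n3 <= t -> `|Omega A n1 n2 n3 (n1 - n2 + n3)| < 1 ->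
  L * t `^ (2 / c) < nrm n1 -> Lambda1 A cls alpha (n1 - n2 + n3) n1 n2 n3.
Proof.
move=> a_ge1 cls_n t_ge1 n2_le n3_le Om_lt1 n1_long.
have L_ge1 := L_ge1.
have n1_gt : L * t < nrm n1.
  apply: le_lt_trans n1_long; apply: ler_wpM2l; first lra.
  by apply: le1r_powR; rewrite // ler_pdivlMr // mul1r.
have cls1 : cls n1 = alpha.
  rewrite -cls_n; apply: (first_same_class t_ge1 n2_le n3_le Om_lt1).
  have L_ge0 := le_trans ler01 L_ge1; have t_ge0 := le_trans ler01 t_ge1.
  apply: le_lt_trans (lt_powR_of_lt_mul_powR c_gt0 L_ge0 t_ge0 n1_long).
  by apply: ler_wpM2r; rewrite ?sqr_ge0.
have K_ge := Kal_ge_half BM a_ge1 cls1.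
set Q : R := 10 ^+ 5.
have Qt : 2 * Q * t <= L * t by apply: ler_wpM2r => //; lra.
have short x : x <= t -> x < 10 ^- 5 * Kal cls alpha.
  move=> x_le; rewrite mulrC ltr_pdivlMr ?exprn_gt0 // -/Q.
  have : x * Q <= t * Q by apply: ler_wpM2r; rewrite ?exprn_ge0.
  by lra.
by split; rewrite ?short.
Qed.

Lemma Lambda3_of_Lambda1_swap alpha n n1 n2 n3 :
  Lambda1 A cls alpha n n3 n2 n1 -> Lambda3 A cls alpha n n1 n2 n3.
Proof.
case=> def_n; rewrite Omega_swap13 => *; split => //.
by rewrite -def_n addrAC [n1 + n3]addrC -addrAC.
Qed.

Lemma star1_le_of_small_Omega alpha n1 n2 n3 :
  (1 <= alpha)%N -> cls (n1 - n2 + n3) = alpha ->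
  ~ Lambda1 A cls alpha (n1 - n2 + n3) n1 n2 n3 ->
  ~ Lambda3 A cls alpha (n1 - n2 + n3) n1 n2 n3 ->
  `|Omega A n1 n2 n3 (n1 - n2 + n3)| < 1 ->
  star1 (brk (nrm n1)) (brk (nrm n2)) (brk (nrm n3))
    <= L * star2 (brk (nrm n1)) (brk (nrm n2)) (brk (nrm n3)) `^ (2 / c).
Proof.
move=> a_ge1 cls_n nL1 nL3 Om_lt1.
set b1 := brk (nrm n1); set b2 := brk (nrm n2); set b3 := brk (nrm n3).
set t := star2 b1 b2 b3.
have t_ge1 : 1 <= t by rewrite star2_ge1 ?brk_ge1.
have L_ge1 := L_ge1.
have t_le : t <= L * t `^ (2 / c).
  apply: le_trans (le1r_powR (r := 2 / c) t_ge1 _) _; first by rewrite ler_pdivlMr // mul1r.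
  by rewrite ler_peMl ?powR_ge0.
rewrite leNgt; apply/negP => T_gt.
have long x : L * t `^ (2 / c) < brk x -> L * t `^ (2 / c) < x.
  by apply: lt_brk; rewrite (le_trans t_ge1).
case: (star2_lt_star1P (le_lt_trans t_le T_gt)).
- case=> b1E b2_le b3_le; apply: nL1; apply: (Lambda1_of_first_long (t := t)) => //.
  + exact: le_trans (le_brk _) b2_le.
  + exact: le_trans (le_brk _) b3_le.
  + by apply: long; rewrite -/b1 b1E.
- case=> b2E b1_le b3_le.
  have := nrm_middle_le t_ge1 (le_trans (le_brk _) b1_le) (le_trans (le_brk _) b3_le) Om_lt1.
  have : L * t `^ (2 / c) < nrm n2 by apply: long; rewrite -/b2 b2E.
  have : L * t <= L * t `^ (2 / c).
    by apply: ler_wpM2l; rewrite ?le1r_powR ?ler_pdivlMr ?mul1r //; lra.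
  by lra.
- case=> b3E b1_le b2_le; apply: nL3; apply: Lambda3_of_Lambda1_swap.
  have def_n : n3 - n2 + n1 = n1 - n2 + n3 by rewrite addrAC [n3 + n1]addrC -addrAC.
  rewrite -def_n; apply: (Lambda1_of_first_long (t := t)) => //; rewrite ?def_n //.
  + exact: le_trans (le_brk _) b2_le.
  + exact: le_trans (le_brk _) b1_le.
  + by rewrite Omega_swap13.
  + by apply: long; rewrite -/b3 b3E.
Qed.

Lemma Omega_inv_le (c0 tau : R) alpha n1 n2 n3 : A^T = A -> 0 < c0 -> 0 < tau ->
  (forall a b : 'rV[int]_d, a != 0 -> b != 0 ->
     c0 * nrm a `^ (- tau) * nrm b `^ (- tau) <= `|bform A a b|) ->
  (1 <= alpha)%N -> cls (n1 - n2 + n3) = alpha ->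
  ~ Lambda1 A cls alpha (n1 - n2 + n3) n1 n2 n3 ->
  ~ Lambda3 A cls alpha (n1 - n2 + n3) n1 n2 n3 ->
  Omega A n1 n2 n3 (n1 - n2 + n3) != 0 ->
  `|Omega A n1 n2 n3 (n1 - n2 + n3)|^-1
    <= Num.max 1 ((2 * D * L) `^ (2 * tau) / (2 * c0))
       * star2 (brk (nrm n1)) (brk (nrm n2)) (brk (nrm n3)) `^ (4 * tau / c).
Proof.
move=> sA c0_gt0 tau_gt0 adm a_ge1 cls_n nL1 nL3 Om_neq0.
set W := Omega _ _ _ _ _; set b1 := brk (nrm n1); set b2 := brk (nrm n2).
set b3 := brk (nrm n3); set t := star2 b1 b2 b3.
have [W_ge1|W_lt1] := lerP 1 `|W|.
  apply: le_trans (_ : 1 <= _); first by rewrite invf_le1 // (lt_le_trans ltr01).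
  rewrite -[X in X <= _]mulr1; apply: ler_pM; rewrite ?le_max ?lexx //.
  by rewrite -{1}(powRr0 t) ler_powR ?star2_ge1 ?brk_ge1 // divr_ge0 ?mulr_ge0 // ltW.
have T_le := star1_le_of_small_Omega a_ge1 cls_n nL1 nL3 W_lt1.
have [b1T b2T b3T] := le_star1 b1 b2 b3.
have le_X x : x <= brk x -> brk x <= star1 b1 b2 b3 -> x <= L * t `^ (2 / c).
  by move=> x_le le_T; apply: le_trans T_le; apply: le_trans le_T.
apply: le_trans (Omega_inv_le_admissible (X := L * t `^ (2 / c)) sA c0_gt0 (ltW tau_gt0)
  adm (le_X _ (le_brk _) b1T) (le_X _ (le_brk _) b2T) (le_X _ (le_brk _) b3T) Om_neq0) _.
have L_ge0 := le_trans ler01 L_ge1.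
rewrite mulrA powRM ?mulr_ge0 ?powR_ge0 // -powRrM mulrAC.
have -> : 2 / c * (2 * tau) = 4 * tau / c by rewrite mulrAC mulrA; congr (_ * _ * _); lra.
by apply: ler_wpM2r; rewrite ?powR_ge0 // le_max lexx orbT.
Qed.

End NonResonance.

Lemma exists_large_constant (R : realType) (c mu a b e : R) : 0 < c -> 0 < mu -> 0 <= b ->
  exists L, [/\ a <= L, b <= L `^ c & e <= mu * L].
Proof.
move=> c_gt0 mu_gt0 b_ge0.
set L := Num.max a (Num.max (b `^ c^-1) (e / mu)).
have root_le : b `^ c^-1 <= L by rewrite !le_max lexx !orbT.
exists L; split.
- by rewrite le_max lexx.
- rewrite -[X in X <= _](powRr1 b_ge0) -(mulVf (lt0r_neq0 c_gt0)) powRrM.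
  apply: (ge0_ler_powR (ltW c_gt0)); rewrite // nnegrE ?powR_ge0 //.
  exact: le_trans (powR_ge0 _ _) root_le.
- by rewrite -ler_pdivrMl // mulrC !le_max lexx !orbT.
Qed.

Theorem lemma2p10 (R : realType) (d : nat) (A : 'M[R]_d) (tau s c CA : R)
    (cls : 'rV[int]_d -> nat) :
  spd A -> admissible A tau -> 0 < tau -> 0 <= s ->
  0 < c -> c <= 2 -> 2 <= CA -> BM_partition A c CA cls ->
  exists C : R, 0 < C /\
    forall alpha0 : nat, is_alpha0 CA cls alpha0 ->
    forall (alpha : nat) (n n1 n2 n3 : 'rV[int]_d),
      (alpha0 <= alpha)%N -> cls n = alpha ->
      ~ Lambda1 A cls alpha n n1 n2 n3 -> ~ Lambda3 A cls alpha n n1 n2 n3 ->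
      n1 - n2 + n3 = n -> Omega A n1 n2 n3 n != 0 ->
      Kal cls alpha `^ s / `|Omega A n1 n2 n3 n|
        <= C * (star1 (brk (nrm n1)) (brk (nrm n2)) (brk (nrm n3))) `^ s
             * (star2 (brk (nrm n1)) (brk (nrm n2)) (brk (nrm n3))) `^ (4 * tau / c).
Proof.
move=> [sA A_pos] [c0 [c0_gt0 adm]] tau_gt0 s_ge0 c_gt0 c_le2 _ BM.
have [mu mu_gt0 lam2_ge] := lam2_coercive A_pos.
have [M M_ge0 lam2_le] := lam2_bounded A.
have B_ge0 : 0 <= 2 * d.+1%:R + 2 * M + 1 :> R by rewrite !addr_ge0 ?mulr_ge0.
have [L [L_ge L_geB L_gemu]] :=
  exists_large_constant (2 * 10 ^+ 5) (2 * M + 1) c_gt0 mu_gt0 B_ge0.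
set C' := Num.max 1 ((2 * d.+1%:R * L) `^ (2 * tau) / (2 * c0)).
exists ((3 * d.+1%:R) `^ s * C'); split.
  by rewrite mulr_gt0 ?powR_gt0 // (lt_le_trans ltr01) // le_max lexx.
move=> alpha0 [a0_ge1 _ _] alpha n n1 n2 n3 a0_le cls_n nL1 nL3 def_n.
subst n => Om_neq0.
have Ks_le := Kal_powR_le_star1 s_ge0 cls_n.
have Om_le := Omega_inv_le c_gt0 c_le2 BM mu_gt0 M_ge0 lam2_ge lam2_le L_ge L_geB L_gemu
  sA c0_gt0 tau_gt0 adm (leq_trans a0_ge1 a0_le) cls_n nL1 nL3 Om_neq0.
apply: le_trans (ler_pM (powR_ge0 _ _) _ Ks_le Om_le) _; first by rewrite invr_ge0.
by rewrite mulrACA mulrA.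
Qed.
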